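(* Let $r\ge2$ be an integer. The following four families span the same (finite-dimensional) linear space of functions on $\mathcal G_H$: (1) $\psi^{0,H}_{r-2p,-p}$ for $1\le p\le\lfloor r/2\rfloor$; (2) $I_{r-2p,2p}$ for $1\le p\le\lfloor r/2\rfloor$; (3) $\xi^{2p}w^{r-2p}$ for $1\le p\le\lfloor r/2\rfloor$; (4) $\xi^2w^{r-2p}(w^2-4\xi^2)^{p-1}$ for $1\le p\le\lfloor r/2\rfloor$.
   Context: $\mathcal G_H=\mathbb R/2\pi\mathbb Z\times\mathbb R$ parametrizes unit-speed geodesics of the Poincaré disk ($\{|z|<1\}$, metric $4|dz|^2/(1-|z|^2)^2$) by $z_{\beta,a}(t)=e^{i\beta}\frac{(2+ia)\tanh(t/2)+ia}{ia\tanh(t/2)-2+ia}$. $I_{p,q}(\beta,a)=\int_{\mathbb R}z_{\beta,a}(t)^p\dot z_{\beta,a}(t)^qdt$. With $\omega=\beta+\tan^{-1}a+\pi/2$ and $\mu_H=(1+a^2)^{-1/2}$: $w=-a\mu_He^{i\omega}$, $\xi=\frac i2\mu_He^{i\omega}$. For $n\in\mathbb N_0$, $k\in\mathbb Z$, $\psi^{0,H}_{n,k}(\beta,a)=\mu_H^2e^{i(n-2k)\omega}p_n\!\big(a/\sqrt{1+a^2}\big)$, where $p_n$ is the multiple of the Jacobi polynomial $P_n^{(1/2,1/2)}$ (equivalently of the Chebyshev polynomial $U_n$) normalized by $\int_{-1}^1p_n(t)^2(1-t^2)^{1/2}dt=(2\pi)^{-1}$. *)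

From Stdlib Require Import Reals.
From Coquelicot Require Import Coquelicot.
Open Scope R_scope.

Definition tanhR (x : R) : R := (exp x - exp (- x)) / (exp x + exp (- x)).

Definition eiC (th : R) : C := (cos th, sin th).

Fixpoint Csum1 (f : nat -> C) (m : nat) : C :=
  match m with O => RtoC 0 | S k => Cplus (Csum1 f k) (f (S k)) end.

(* unit-speed geodesics z_{beta,a}(t) of the Poincare disk *)
Definition zH (beta a t : R) : C :=
  Cmult (eiC beta)
    (Cdiv (Cplus (Cmult (2, a) (RtoC (tanhR (t / 2)))) (0, a))
          (Cplus (Cmult (0, a) (RtoC (tanhR (t / 2)))) (-2, a))).

Definition zHdot (beta a t : R) : C :=
  (Derive (fun s => fst (zH beta a s)) t, Derive (fun s => snd (zH beta a s)) t).

Definition IH (p q : nat) (beta a : R) : C :=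
  (RInt_gen (fun t => fst (Cmult (Cpow (zH beta a t) p) (Cpow (zHdot beta a t) q)))
            (Rbar_locally m_infty) (Rbar_locally p_infty),
   RInt_gen (fun t => snd (Cmult (Cpow (zH beta a t) p) (Cpow (zHdot beta a t) q)))
            (Rbar_locally m_infty) (Rbar_locally p_infty)).

Definition omegaH (beta a : R) : R := beta + atan a + PI / 2.
Definition muH (a : R) : R := / sqrt (1 + a ^ 2).
Definition wH (beta a : R) : C := Cmult (RtoC (- a * muH a)) (eiC (omegaH beta a)).
Definition xiH (beta a : R) : C := Cmult (0, / 2 * muH a) (eiC (omegaH beta a)).

Fixpoint chebU (n : nat) (t : R) : R :=
  match n with
  | O => 1
  | S O => 2 * t
  | S ((S m) as k) => 2 * t * chebU k t - chebU m t
  end.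

(* pn is "the" normalized multiple of U_n (determined up to sign) *)
Definition normalized_cheb (pn : nat -> R -> R) : Prop :=
  forall n, (exists c : R, forall t, pn n t = c * chebU n t) /\
    RInt (fun t => (pn n t) ^ 2 * sqrt (1 - t ^ 2)) (-1) 1 = / (2 * PI).

Definition psi0H (pn : nat -> R -> R) (n : nat) (k : Z) (beta a : R) : C :=
  Cmult (RtoC (muH a ^ 2))
    (Cmult (eiC ((INR n - 2 * IZR k) * omegaH beta a))
           (RtoC (pn n (a / sqrt (1 + a ^ 2))))).

Definition in_span (fam : nat -> R -> R -> C) (m : nat) (f : R -> R -> C) : Prop :=
  exists c : nat -> C, forall beta a, f beta a = Csum1 (fun p => Cmult (c p) (fam p beta a)) m.

(* Write t = a / sqrt (1 + a^2).  Each function of families (1), (3), (4) is e^{i r omega} times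
   a polynomial in t, and the polynomials (1 - t^2) t^(r - 2k), 1 <= k <= r/2, form a common basis
   in which the three families are triangular with nonzero diagonal: psi_{r-2p,-p} is
   (1 - t^2) p_{r-2p}(t), and U_n = 2^n t^n + (lower terms of the same parity); xi^{2p} w^{r-2p} is a
   constant times (1 - t^2)^p t^(r-2p); and w^2 - 4 xi^2 = e^{2 i omega} because t^2 + mu^2 = 1, so
   family (4) is diagonal.
   For family (2), the geodesic is z = w + 2 xi v, where v runs from -1 to 1 and
   dz/dt = xi (1 - v^2).  Hence I_{r-2p,2p} = 2 xi^{2p} int_{-1}^{1} (w + 2 xi v)^{r-2p}
   (1 - v^2)^{2p-1} dv; only even powers of v survive, which expresses it through the
   xi^{2(p+i)} w^{r-2(p+i)}, i >= 0, with i = 0 coefficient a positive multiple of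
   int_0^1 (1 - s^2)^{2p-1} ds. *)

From Stdlib Require Import Reals Lia Lra Wf_nat FunctionalExtensionality.
From Coquelicot Require Import Coquelicot.
Open Scope R_scope.

(** * Spans of finite families *)

Lemma Csum1_ext f g m : (forall k, (1 <= k <= m)%nat -> f k = g k) -> Csum1 f m = Csum1 g m.
Proof.
  induction m as [|m IH]; intros H; simpl; auto.
  rewrite IH by (intros; apply H; lia). rewrite (H (S m)) by lia. auto.
Qed.

Lemma Csum1_plus f g m : Csum1 (fun k => f k + g k)%C m = (Csum1 f m + Csum1 g m)%C.
Proof. induction m; simpl; [apply injective_projections; simpl; ring|]. rewrite IHm. ring. Qed.

Lemma Csum1_scal s f m : Csum1 (fun k => s * f k)%C m = (s * Csum1 f m)%C.
Proof. induction m; simpl; [apply injective_projections; simpl; ring|]. rewrite IHm. ring. Qed.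

Lemma Csum1_zero m : Csum1 (fun _ => RtoC 0) m = 0.
Proof. induction m; simpl; auto. rewrite IHm. ring. Qed.

Lemma Csum1_indicator (g : nat -> C) k m : (1 <= k <= m)%nat ->
  Csum1 (fun j => if Nat.eq_dec j k then g j else RtoC 0) m = g k.
Proof.
  induction m as [|m IH]; intros H; [lia|]. cbn [Csum1].
  destruct (Nat.eq_dec (S m) k) as [<-|].
  - rewrite (Csum1_ext _ (fun _ => RtoC 0)), Csum1_zero; [ring|].
    intros j Hj. destruct (Nat.eq_dec j (S m)); auto; lia.
  - rewrite IH by lia. ring.
Qed.

Section SpanRange.
Context {X : Type}.
Implicit Types (F G : nat -> X -> C) (f g : X -> C).

(* [f] is a combination of [F lo], ..., [F hi] (indices start at 1, as in [Csum1]). *)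
Definition in_span_range F lo hi f : Prop :=
  exists c : nat -> C, (forall k, (k < lo)%nat -> c k = 0) /\
    forall x, f x = Csum1 (fun k => c k * F k x)%C hi.

Lemma in_span_range_ext F lo hi f g :
  (forall x, f x = g x) -> in_span_range F lo hi f -> in_span_range F lo hi g.
Proof. intros E [c [Hc Hf]]. exists c; split; auto. intros x; rewrite <- E; auto. Qed.

Lemma in_span_range_fam_ext F G lo hi f :
  (forall k x, F k x = G k x) -> in_span_range F lo hi f -> in_span_range G lo hi f.
Proof.
  intros E [c [Hc Hf]]. exists c; split; auto.
  intros x; rewrite Hf. apply Csum1_ext; intros; rewrite E; auto.
Qed.

Lemma in_span_range0 F lo hi : in_span_range F lo hi (fun _ => RtoC 0).
Proof.
  exists (fun _ => RtoC 0); split; auto. intros x.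
  rewrite (Csum1_ext _ (fun _ => RtoC 0)), Csum1_zero; auto. intros; ring.
Qed.

Lemma in_span_rangeD F lo hi f g : in_span_range F lo hi f -> in_span_range F lo hi g ->
  in_span_range F lo hi (fun x => f x + g x)%C.
Proof.
  intros [c [Hc Hf]] [d [Hd Hg]]. exists (fun k => c k + d k)%C; split.
  - intros k Hk; rewrite Hc, Hd by auto; ring.
  - intros x. rewrite Hf, Hg, <- Csum1_plus. apply Csum1_ext; intros; ring.
Qed.

Lemma in_span_rangeZ F lo hi s f : in_span_range F lo hi f ->
  in_span_range F lo hi (fun x => s * f x)%C.
Proof.
  intros [c [Hc Hf]]. exists (fun k => s * c k)%C; split.
  - intros k Hk; rewrite Hc by auto; ring.
  - intros x. rewrite Hf, <- Csum1_scal. apply Csum1_ext; intros; ring.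
Qed.

Lemma in_span_range_gen F lo hi k : (lo <= k <= hi)%nat -> (1 <= k)%nat ->
  in_span_range F lo hi (F k).
Proof.
  intros Hk Hk1. exists (fun j => if Nat.eq_dec j k then RtoC 1 else RtoC 0); split.
  - intros j Hj. destruct (Nat.eq_dec j k); auto; lia.
  - intros x. rewrite (Csum1_ext _ (fun j => if Nat.eq_dec j k then F j x else RtoC 0)).
    + rewrite Csum1_indicator by lia. auto.
    + intros j _. destruct (Nat.eq_dec j k); ring.
Qed.

Lemma in_span_range_trans F G lo hi lo' hi' f : in_span_range F lo hi f ->
  (forall k, (lo <= k <= hi)%nat -> (1 <= k)%nat -> in_span_range G lo' hi' (F k)) ->
  in_span_range G lo' hi' f.
Proof.
  intros [c [Hc Hf]] HF.
  apply (in_span_range_ext _ _ _ (fun x => Csum1 (fun k => c k * F k x)%C hi)); auto.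
  assert (Hpartial : forall N, (N <= hi)%nat ->
    in_span_range G lo' hi' (fun x => Csum1 (fun k => c k * F k x)%C N)).
  { induction N as [|N IH]; intros HN; simpl; [apply in_span_range0|].
    apply in_span_rangeD; [apply IH; lia|].
    destruct (Nat.lt_ge_cases (S N) lo).
    - rewrite Hc by auto. apply (in_span_range_ext _ _ _ (fun _ => RtoC 0));
        [intros; ring | apply in_span_range0].
    - apply in_span_rangeZ, HF; lia. }
  apply Hpartial; lia.
Qed.

Lemma in_span_range_widen F lo hi lo' hi' f : (lo' <= lo)%nat -> (hi <= hi')%nat ->
  in_span_range F lo hi f -> in_span_range F lo' hi' f.
Proof.
  intros Hlo Hhi H. apply (in_span_range_trans _ _ _ _ _ _ _ H).
  intros; apply in_span_range_gen; lia.
Qed.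

Lemma in_span_range_solve F lo hi f g (d : C) : d <> 0 ->
  in_span_range F lo hi g -> in_span_range F lo hi (fun x => g x - d * f x)%C ->
  in_span_range F lo hi f.
Proof.
  intros Hd Hg Hres.
  apply (in_span_range_ext _ _ _ (fun x => / d * (g x + (-1) * (g x - d * f x)))%C).
  { intros x. field. exact Hd. }
  apply in_span_rangeZ, in_span_rangeD; [exact Hg|]. apply in_span_rangeZ, Hres.
Qed.

Definition multiple_mod_span F lo hi (g h : X -> C) : Prop :=
  exists d : C, d <> 0 /\ in_span_range F lo hi (fun x => g x - d * h x)%C.

(* [G] is triangular with respect to [F]: modulo [F k] for indices of smaller rank [mu k],
   [G p] is a nonzero multiple of [F p].  Lower triangular is [mu p = p], upper is [mu p = m - p]. *)
Section Triangular.
Variables (F G : nat -> X -> C) (m : nat) (mu lo hi : nat -> nat).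
Hypothesis triangular_range : forall p, (1 <= p <= m)%nat ->
  (1 <= lo p)%nat /\ (hi p <= m)%nat /\ forall k, (lo p <= k <= hi p)%nat -> (mu k < mu p)%nat.
Hypothesis triangular : forall p, (1 <= p <= m)%nat ->
  multiple_mod_span F (lo p) (hi p) (G p) (F p).

Lemma triangular_in_span : forall p, (1 <= p <= m)%nat -> in_span_range G 1 m (F p).
Proof.
  intros p. induction p as [p IH] using (induction_ltof1 _ mu). intros Hp. unfold ltof in IH.
  destruct (triangular p Hp) as [d [Hd Hres]].
  destruct (triangular_range p Hp) as [Hlo [Hhi Hmu]].
  apply (in_span_range_solve _ _ _ _ (G p) d Hd); [apply in_span_range_gen; lia|].
  apply (in_span_range_trans _ _ _ _ _ _ _ Hres). intros k Hk _.
  apply IH; [apply Hmu|]; lia.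
Qed.

Lemma triangular_span_eq f : in_span_range F 1 m f <-> in_span_range G 1 m f.
Proof.
  split; intros Hf; apply (in_span_range_trans _ _ _ _ _ _ _ Hf); intros p Hp _.
  - apply triangular_in_span; lia.
  - destruct (triangular p ltac:(lia)) as [d [_ Hres]].
    destruct (triangular_range p ltac:(lia)) as [Hlo [Hhi _]].
    apply (in_span_range_ext _ _ _ (fun x => (G p x - d * F p x) + d * F p x)%C); [intros; ring|].
    apply in_span_rangeD; [exact (in_span_range_widen _ _ _ _ _ _ Hlo Hhi Hres)|].
    apply in_span_rangeZ, in_span_range_gen; lia.
Qed.

End Triangular.

End SpanRange.

Lemma in_span_range_mul {X} (F : nat -> X -> C) lo hi (h f : X -> C) :
  in_span_range F lo hi f ->
  in_span_range (fun k x => h x * F k x)%C lo hi (fun x => h x * f x)%C.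
Proof.
  intros [c [Hc Hf]]. exists c; split; auto.
  intros x. rewrite Hf, <- Csum1_scal. apply Csum1_ext; intros; ring.
Qed.

Lemma in_span_range_comp {X Y} (F : nat -> X -> C) lo hi (g : Y -> X) f :
  in_span_range F lo hi f -> in_span_range (fun k y => F k (g y)) lo hi (fun y => f (g y)).
Proof. intros [c [Hc Hf]]. exists c; split; auto. Qed.

Lemma multiple_mod_span_mul_comp {X Y} (F : nat -> X -> C) lo hi (E : Y -> C) (g : Y -> X) a b :
  multiple_mod_span F lo hi a b ->
  multiple_mod_span (fun k y => E y * F k (g y))%C lo hi
    (fun y => E y * a (g y))%C (fun y => E y * b (g y))%C.
Proof.
  intros [d [Hd Hres]]. exists d; split; auto.
  apply (in_span_range_comp _ _ _ g), (in_span_range_mul _ _ _ E) in Hres.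
  eapply in_span_range_ext; [|exact Hres]. intros y; cbv beta; ring.
Qed.

Lemma in_span_iff (F : nat -> R -> R -> C) m f :
  in_span F m f <-> in_span_range (fun k => uncurry (F k)) 1 m (uncurry f).
Proof.
  split.
  - intros [c Hc]. exists (fun k => match k with O => RtoC 0 | _ => c k end); split.
    + intros k Hk; destruct k; auto; lia.
    + intros [b a]. simpl. rewrite Hc. apply Csum1_ext. intros [|k] Hk; auto; lia.
  - intros [c [_ Hc]]. exists c. intros b a. apply (Hc (b, a)).
Qed.

Lemma in_span_eq_of_triangular (F G : nat -> R -> R -> C) m (mu lo hi : nat -> nat) :
  (forall p, (1 <= p <= m)%nat ->
    (1 <= lo p)%nat /\ (hi p <= m)%nat /\ forall k, (lo p <= k <= hi p)%nat -> (mu k < mu p)%nat) ->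
  (forall p, (1 <= p <= m)%nat ->
    multiple_mod_span (fun k => uncurry (F k)) (lo p) (hi p) (uncurry (G p)) (uncurry (F p))) ->
  forall f, in_span F m f <-> in_span G m f.
Proof.
  intros Hrange Htri f. rewrite !in_span_iff.
  exact (triangular_span_eq _ _ m mu lo hi Hrange Htri (uncurry f)).
Qed.

(** * Chebyshev polynomials and the polynomial basis *)

Lemma div2_bounds n : (2 * Nat.div n 2 <= n <= 2 * Nat.div n 2 + 1)%nat.
Proof. pose proof (Nat.div_mod n 2). pose proof (Nat.mod_upper_bound n 2). lia. Qed.

Definition monomial_down (n i : nat) (t : R) : C := RtoC (t ^ (n - 2 * i)).

Lemma chebU_SS n t : chebU (S (S n)) t = 2 * t * chebU (S n) t - chebU n t.
Proof. destruct n; reflexivity. Qed.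

Lemma chebU_sub_leading n :
  in_span_range (monomial_down n) 1 (Nat.div n 2) (fun t => RtoC (chebU n t - 2 ^ n * t ^ n)).
Proof.
  induction n as [n IH] using (well_founded_induction lt_wf).
  destruct n as [|[|n]].
  - apply (in_span_range_ext _ _ _ (fun _ => RtoC 0)); [intros; f_equal; simpl; ring|].
    apply in_span_range0.
  - apply (in_span_range_ext _ _ _ (fun _ => RtoC 0)); [intros; f_equal; simpl; ring|].
    apply in_span_range0.
  - pose proof (div2_bounds n). pose proof (div2_bounds (S n)). pose proof (div2_bounds (S (S n))).
    assert (Hdiv : Nat.div (S (S n)) 2 = S (Nat.div n 2)) by lia.
    pose proof (IH (S n) ltac:(lia)) as IH1. pose proof (IH n ltac:(lia)) as IH0.
    apply (in_span_range_ext _ _ _ (fun t =>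
      RtoC (2 * t) * RtoC (chebU (S n) t - 2 ^ S n * t ^ S n)
      + (-1) * (RtoC (chebU n t - 2 ^ n * t ^ n) + RtoC (2 ^ n) * monomial_down (S (S n)) 1 t))%C).
    { intros t. unfold monomial_down. replace (S (S n) - 2 * 1)%nat with n by lia.
      rewrite chebU_SS. apply injective_projections; cbn -[chebU]; ring. }
    rewrite Hdiv. apply in_span_rangeD; [|apply (in_span_rangeZ _ _ _ (-1)%C) ; apply in_span_rangeD].
    + apply (in_span_range_mul _ _ _ (fun t => RtoC (2 * t))) in IH1.
      apply (in_span_range_trans _ _ _ _ _ _ _ IH1). intros i Hi _.
      apply (in_span_range_ext _ _ _ (fun t => 2 * monomial_down (S (S n)) i t)%C).
      { intros t. unfold monomial_down.
        replace (S (S n) - 2 * i)%nat with (S (S n - 2 * i)) by lia.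
        rewrite <- tech_pow_Rmult. apply injective_projections; cbn -[pow]; ring. }
      apply in_span_rangeZ, in_span_range_gen; lia.
    + apply (in_span_range_trans _ _ _ _ _ _ _ IH0). intros i Hi _.
      apply (in_span_range_ext _ _ _ (monomial_down (S (S n)) (S i))).
      { intros t. unfold monomial_down. do 2 f_equal. lia. }
      apply in_span_range_gen; lia.
    + apply in_span_rangeZ, in_span_range_gen; lia.
Qed.

Definition basis_poly (r k : nat) (t : R) : C := RtoC ((1 - t ^ 2) * t ^ (r - 2 * k)).

Lemma neg_pow t n : (- t) ^ n = (-1) ^ n * t ^ n.
Proof. rewrite <- Rpow_mult_distr. f_equal. ring. Qed.

Lemma basis_poly_scal_mod r k lo hi (d : R) : d <> 0 ->
  multiple_mod_span (basis_poly r) lo hi (fun t => RtoC (d * ((1 - t ^ 2) * t ^ (r - 2 * k))))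
    (basis_poly r k).
Proof.
  intros Hd. exists (RtoC d). split; [intros E; apply Hd; exact (f_equal fst E)|].
  apply (in_span_range_ext _ _ _ (fun _ => RtoC 0)); [|apply in_span_range0].
  intros t. unfold basis_poly. rewrite RtoC_mult. ring.
Qed.

Lemma one_minus_sq_pow_mod r j k : (j < k)%nat -> (2 * k <= r)%nat ->
  in_span_range (basis_poly r) (k - j) (k - 1)
    (fun t => RtoC ((1 - t ^ 2) ^ S j * t ^ (r - 2 * k)) - basis_poly r k t)%C.
Proof.
  revert k. induction j as [|j IH]; intros k Hjk Hk.
  - apply (in_span_range_ext _ _ _ (fun _ => RtoC 0)); [|apply in_span_range0].
    intros t. unfold basis_poly. rewrite pow_1. ring.
  - pose proof (IH k ltac:(lia) Hk) as Hk0. pose proof (IH (k - 1)%nat ltac:(lia) ltac:(lia)) as Hk1.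
    apply (in_span_range_ext _ _ _ (fun t =>
      (RtoC ((1 - t ^ 2) ^ S j * t ^ (r - 2 * k)) - basis_poly r k t)
      + (-1) * (RtoC ((1 - t ^ 2) ^ S j * t ^ (r - 2 * (k - 1))) - basis_poly r (k - 1) t)
      + (-1) * basis_poly r (k - 1) t)%C).
    { intros t. unfold basis_poly.
      replace (r - 2 * (k - 1))%nat with (2 + (r - 2 * k))%nat by lia.
      rewrite pow_add, <- (tech_pow_Rmult (1 - t ^ 2) (S j)).
      apply injective_projections; cbn -[pow]; ring. }
    apply in_span_rangeD; [apply in_span_rangeD|].
    + eapply in_span_range_widen; [| |exact Hk0]; lia.
    + apply in_span_rangeZ. eapply in_span_range_widen; [| |exact Hk1]; lia.
    + apply in_span_rangeZ, in_span_range_gen; lia.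
Qed.

Lemma basis_poly_pow_mod r k (d : R) : d <> 0 -> (1 <= k)%nat -> (2 * k <= r)%nat ->
  multiple_mod_span (basis_poly r) 1 (k - 1)
    (fun t => RtoC (d * ((1 - t ^ 2) ^ k * t ^ (r - 2 * k)))) (basis_poly r k).
Proof.
  intros Hd Hk1 Hk. exists (RtoC d). split; [intros E; apply Hd; exact (f_equal fst E)|].
  pose proof (one_minus_sq_pow_mod r (k - 1) k ltac:(lia) Hk) as H.
  replace (S (k - 1)) with k in H by lia. replace (k - (k - 1))%nat with 1%nat in H by lia.
  apply (in_span_rangeZ _ _ _ (RtoC d)) in H.
  eapply in_span_range_ext; [|exact H]. intros t. rewrite RtoC_mult. cbv beta. ring.
Qed.

Lemma basis_poly_cheb_mod r p (c : R) : c <> 0 -> (2 * p <= r)%nat ->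
  multiple_mod_span (basis_poly r) (S p) (Nat.div r 2)
    (fun t => RtoC ((1 - t ^ 2) * (c * chebU (r - 2 * p) t))) (basis_poly r p).
Proof.
  intros Hc Hp. exists (RtoC (c * 2 ^ (r - 2 * p))). split.
  { intros E. apply (f_equal fst) in E. simpl in E.
    apply (Rmult_integral_contrapositive_currified c (2 ^ (r - 2 * p))); auto.
    apply pow_nonzero; lra. }
  pose proof (chebU_sub_leading (r - 2 * p)) as H.
  apply (in_span_range_mul _ _ _ (fun t => RtoC (c * (1 - t ^ 2)))) in H.
  apply (in_span_range_ext _ _ _ (fun t => RtoC (c * (1 - t ^ 2))
    * RtoC (chebU (r - 2 * p) t - 2 ^ (r - 2 * p) * t ^ (r - 2 * p)))%C).
  { intros t. unfold basis_poly. rewrite <- !RtoC_mult, <- RtoC_minus. f_equal. ring. }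
  apply (in_span_range_trans _ _ _ _ _ _ _ H).
  intros i Hi _. pose proof (div2_bounds r). pose proof (div2_bounds (r - 2 * p)).
  apply (in_span_range_ext _ _ _ (fun t => RtoC c * basis_poly r (p + i) t)%C).
  { intros t. unfold basis_poly, monomial_down. rewrite <- !RtoC_mult. f_equal.
    replace (r - 2 * (p + i))%nat with (r - 2 * p - 2 * i)%nat by lia. ring. }
  apply in_span_rangeZ, in_span_range_gen; lia.
Qed.

Lemma multiple_mod_span_ext {X} (F F' : nat -> X -> C) lo hi g g' h h' :
  (forall k x, F k x = F' k x) -> (forall x, g x = g' x) -> (forall x, h x = h' x) ->
  multiple_mod_span F lo hi g h -> multiple_mod_span F' lo hi g' h'.
Proof.
  intros EF Eg Eh [d [Hd Hres]]. exists d; split; auto.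
  apply (in_span_range_fam_ext _ _ _ _ _ EF).
  eapply in_span_range_ext; [|exact Hres]. intros x; cbv beta. rewrite Eg, Eh. auto.
Qed.

Lemma eiC_add x y : eiC (x + y) = (eiC x * eiC y)%C.
Proof.
  unfold eiC. apply injective_projections; simpl; [rewrite cos_plus|rewrite sin_plus]; ring.
Qed.

Lemma eiC_pow th n : (eiC th ^ n)%C = eiC (INR n * th).
Proof.
  induction n as [|n IH].
  - unfold eiC. simpl. rewrite Rmult_0_l, cos_0, sin_0. auto.
  - rewrite Cpow_S, IH, <- eiC_add, S_INR. f_equal. ring.
Qed.

Lemma sqrt_one_plus_sq_pos a : 0 < sqrt (1 + a ^ 2).
Proof. apply sqrt_lt_R0. nra. Qed.

Lemma muH_sq a : muH a ^ 2 * (1 + a ^ 2) = 1.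
Proof.
  unfold muH. pose proof (sqrt_one_plus_sq_pos a).
  rewrite <- (sqrt_sqrt (1 + a ^ 2)) at 2 by nra. field. lra.
Qed.

(* The argument [a / sqrt (1 + a^2)] of [p_n] in [psi0H]. *)
Definition tH (a : R) : R := a * muH a.

Lemma one_minus_tH_sq a : 1 - tH a ^ 2 = muH a ^ 2.
Proof.
  pose proof (muH_sq a). unfold tH. rewrite Rpow_mult_distr.
  apply (Rmult_eq_reg_r (1 + a ^ 2)); [|nra].
  replace ((1 - a ^ 2 * muH a ^ 2) * (1 + a ^ 2)) with (1 + a ^ 2 - a ^ 2 * (muH a ^ 2 * (1 + a ^ 2))) by ring.
  rewrite H. ring.
Qed.

Definition phase (r : nat) (b a : R) : C := (eiC (omegaH b a) ^ r)%C.

Definition basis_fun (r k : nat) (b a : R) : C := (phase r b a * basis_poly r k (tH a))%C.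

Lemma multiple_mod_span_factor r lo hi k (F : R -> R -> C) (phi : R -> C) :
  (forall b a, F b a = phase r b a * phi (tH a))%C ->
  multiple_mod_span (basis_poly r) lo hi phi (basis_poly r k) ->
  multiple_mod_span (fun j => uncurry (basis_fun r j)) lo hi (uncurry F) (uncurry (basis_fun r k)).
Proof.
  intros HF H.
  apply (multiple_mod_span_mul_comp _ _ _ (fun x => phase r (fst x) (snd x)) (fun x => tH (snd x))) in H.
  eapply multiple_mod_span_ext; [| | |exact H]; intros; repeat match goal with x : R * R |- _ => destruct x end;
    simpl; rewrite ?HF; auto.
Qed.

Section Factorizations.
Variables (r k : nat) (b a : R).
Hypothesis Hk : (2 * k <= r)%nat.

Lemma xiH_sq : (xiH b a ^ 2 = RtoC (- (muH a / 2) ^ 2) * eiC (omegaH b a) ^ 2)%C.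
Proof.
  unfold xiH. rewrite Cpow_mult_l. f_equal. apply injective_projections; simpl; field.
Qed.

Lemma wH_eq : wH b a = (RtoC (- tH a) * eiC (omegaH b a))%C.
Proof. unfold wH, tH. f_equal. f_equal. ring. Qed.

Lemma phase_split i j : (i + j = r)%nat ->
  phase r b a = (eiC (omegaH b a) ^ i * eiC (omegaH b a) ^ j)%C.
Proof. intros <-. apply Cpow_add_r. Qed.

Lemma psi0H_factor pn :
  psi0H pn (r - 2 * k) (- Z.of_nat k) b a
  = (phase r b a * RtoC ((1 - tH a ^ 2) * pn (r - 2 * k)%nat (tH a)))%C.
Proof.
  unfold psi0H, phase. rewrite eiC_pow.
  replace (INR (r - 2 * k) - 2 * IZR (- Z.of_nat k)) with (INR r).
  - rewrite one_minus_tH_sq, RtoC_mult. unfold tH, muH, Rdiv. ring.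
  - rewrite minus_INR, mult_INR, opp_IZR, <- INR_IZR_INZ by lia. simpl. ring.
Qed.

Lemma xi_w_monomial_factor :
  (xiH b a ^ (2 * k) * wH b a ^ (r - 2 * k))%C
  = (phase r b a * RtoC (((-1/4) ^ k * (-1) ^ (r - 2 * k)) *
       ((1 - tH a ^ 2) ^ k * tH a ^ (r - 2 * k))))%C.
Proof.
  rewrite Cpow_mult_r, xiH_sq, wH_eq, !Cpow_mult_l, <- Cpow_mult_r,
    (phase_split (2 * k) (r - 2 * k)), <- !RtoC_pow by lia.
  transitivity (eiC (omegaH b a) ^ (2 * k) * eiC (omegaH b a) ^ (r - 2 * k)
    * RtoC ((- (muH a / 2) ^ 2) ^ k * (- tH a) ^ (r - 2 * k)))%C; [rewrite RtoC_mult; ring|].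
  f_equal. f_equal. rewrite one_minus_tH_sq, (neg_pow (tH a)).
  replace (- (muH a / 2) ^ 2) with (-1 / 4 * muH a ^ 2) by field.
  rewrite Rpow_mult_distr. ring.
Qed.

Lemma wH_sq_sub_xiH_sq : (wH b a ^ 2 - 4 * xiH b a ^ 2 = eiC (omegaH b a) ^ 2)%C.
Proof.
  rewrite xiH_sq, wH_eq, Cpow_mult_l, <- RtoC_pow.
  transitivity (RtoC ((- tH a) ^ 2 - 4 * - (muH a / 2) ^ 2) * eiC (omegaH b a) ^ 2)%C;
    [rewrite RtoC_minus, !RtoC_mult; ring|].
  replace ((- tH a) ^ 2 - 4 * - (muH a / 2) ^ 2) with (tH a ^ 2 + (1 - tH a ^ 2))
    by (rewrite one_minus_tH_sq; field).
  replace (tH a ^ 2 + (1 - tH a ^ 2)) with 1 by ring. ring.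
Qed.

Lemma xi_w_discriminant_factor : (1 <= k)%nat ->
  (xiH b a ^ 2 * (wH b a ^ (r - 2 * k) * (wH b a ^ 2 - 4 * xiH b a ^ 2) ^ (k - 1)))%C
  = (phase r b a * RtoC ((-1/4 * (-1) ^ (r - 2 * k)) * ((1 - tH a ^ 2) * tH a ^ (r - 2 * k))))%C.
Proof.
  intros Hk1.
  rewrite wH_sq_sub_xiH_sq, <- Cpow_mult_r, xiH_sq, wH_eq, Cpow_mult_l, <- RtoC_pow.
  replace (phase r b a) with (eiC (omegaH b a) ^ 2 * (eiC (omegaH b a) ^ (r - 2 * k)
    * eiC (omegaH b a) ^ (2 * (k - 1))))%C by (unfold phase; rewrite <- !Cpow_add_r; f_equal; lia).
  transitivity (eiC (omegaH b a) ^ 2 * (eiC (omegaH b a) ^ (r - 2 * k)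
    * eiC (omegaH b a) ^ (2 * (k - 1)))
    * RtoC (- (muH a / 2) ^ 2 * (- tH a) ^ (r - 2 * k)))%C; [rewrite RtoC_mult; ring|].
  f_equal. f_equal. rewrite one_minus_tH_sq, (neg_pow (tH a)). field.
Qed.

End Factorizations.

Fixpoint Csum0 (f : nat -> C) (n : nat) : C :=
  match n with O => f O | S k => (Csum0 f k + f (S k))%C end.

Lemma Csum0_ext f g n : (forall j, (j <= n)%nat -> f j = g j) -> Csum0 f n = Csum0 g n.
Proof.
  induction n as [|n IH]; simpl; intros H; [apply H; lia|].
  rewrite IH by (intros; apply H; lia). rewrite H by lia. auto.
Qed.

Lemma Csum0_plus f g n : Csum0 (fun j => f j + g j)%C n = (Csum0 f n + Csum0 g n)%C.
Proof. induction n; simpl; auto. rewrite IHn. ring. Qed.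

Lemma Csum0_scal s f n : Csum0 (fun j => s * f j)%C n = (s * Csum0 f n)%C.
Proof. induction n; simpl; auto. rewrite IHn. ring. Qed.

Lemma Csum0_shift f n : Csum0 f (S n) = (f O + Csum0 (fun j => f (S j)) n)%C.
Proof. induction n as [|n IH]; [reflexivity|]. cbn [Csum0] in *. rewrite IH. ring. Qed.

Lemma Csum0_mult f g n M :
  (Csum0 f n * Csum0 g M)%C = Csum0 (fun j => Csum0 (fun l => f j * g l)%C M) n.
Proof.
  induction n as [|n IH]; simpl; [rewrite Csum0_scal; auto|].
  rewrite Cmult_plus_distr_r, IH, Csum0_scal. reflexivity.
Qed.

Lemma Csum0_RtoC (f : nat -> R) N : Csum0 (fun l => RtoC (f l)) N = RtoC (sum_f_R0 f N).
Proof. induction N; simpl; auto. rewrite IHN, RtoC_plus. auto. Qed.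

Lemma in_span_range_Csum0 {X} (F : nat -> X -> C) lo hi (h : nat -> X -> C) N :
  (forall j, (j <= N)%nat -> in_span_range F lo hi (h j)) ->
  in_span_range F lo hi (fun x => Csum0 (fun j => h j x) N).
Proof.
  induction N as [|N IH]; intros H; simpl; [apply H; lia|].
  apply in_span_rangeD; [apply IH; intros; apply H; lia|apply H; lia].
Qed.

Fixpoint binom (n k : nat) : nat :=
  match n, k with
  | _, O => 1%nat
  | O, S _ => 0%nat
  | S n', S k' => (binom n' k' + binom n' (S k'))%nat
  end.

Lemma binom_gt n k : (n < k)%nat -> binom n k = 0%nat.
Proof. revert k; induction n; intros [|k] H; simpl; try lia. rewrite !IHn by lia. auto. Qed.

Lemma binom_n0 n : binom n 0 = 1%nat.
Proof. destruct n; reflexivity. Qed.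

Lemma binom_S n j : binom (S n) j = (binom n j + match j with O => 0 | S j' => binom n j' end)%nat.
Proof. destruct j; [destruct n; reflexivity|]. simpl. lia. Qed.

Lemma Cpow_binomial A B n :
  ((A + B) ^ n)%C = Csum0 (fun j => INR (binom n j) * A ^ (n - j) * B ^ j)%C n.
Proof.
  induction n as [|n IH]; [simpl; ring|].
  rewrite Cpow_S, IH.
  rewrite (Csum0_ext _ (fun j => INR (binom n j) * A ^ (S n - j) * B ^ j
      + INR (match j with O => 0 | S j' => binom n j' end) * A ^ (S n - j) * B ^ j)%C (S n)).
  2:{ intros j Hj. rewrite binom_S, plus_INR, RtoC_plus. ring. }
  rewrite Csum0_plus, Cmult_plus_distr_r. f_equal.
  - cbn [Csum0]. rewrite (binom_gt n (S n)), <- Csum0_scal by lia. simpl INR.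
    replace (INR 0) with 0 by reflexivity.
    transitivity (Csum0 (fun j => A * (INR (binom n j) * A ^ (n - j) * B ^ j))%C n + 0)%C; [ring|].
    f_equal; [|ring]. apply Csum0_ext. intros j Hj.
    replace (S n - j)%nat with (S (n - j)) by lia. rewrite Cpow_S. ring.
  - rewrite Csum0_shift, <- Csum0_scal. simpl INR.
    transitivity (0 + Csum0 (fun j => B * (INR (binom n j) * A ^ (n - j) * B ^ j))%C n)%C; [ring|].
    f_equal; [ring|]. apply Csum0_ext. intros j Hj.
    replace (S n - S j)%nat with (n - j)%nat by lia. rewrite Cpow_S. ring.
Qed.

(** * Derivatives of complex-valued functions of a real variable *)

Definition is_derive_C (f : R -> C) (t : R) (l : C) : Prop :=
  is_derive (fun s => fst (f s)) t (fst l) /\ is_derive (fun s => snd (f s)) t (snd l).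

Lemma is_derive_eq (f : R -> R) x l l' : is_derive f x l -> l = l' -> is_derive f x l'.
Proof. intros H <-; auto. Qed.

Lemma is_derive_C_ext f g t l : (forall s, f s = g s) -> is_derive_C f t l -> is_derive_C g t l.
Proof.
  intros E [H1 H2]. split; eapply is_derive_ext; try eassumption; intros; simpl; rewrite E; auto.
Qed.

Lemma is_derive_C_eq f t l l' : is_derive_C f t l -> l = l' -> is_derive_C f t l'.
Proof. intros H <-; auto. Qed.

Lemma is_derive_C_const (k : C) t : is_derive_C (fun _ => k) t 0.
Proof. split; exact (is_derive_const _ t). Qed.

Lemma is_derive_C_RtoC (phi : R -> R) t d : is_derive phi t d -> is_derive_C (fun s => RtoC (phi s)) t d.
Proof. intros H. split; [exact H | exact (is_derive_const 0 t)]. Qed.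

Lemma is_derive_C_id t : is_derive_C (fun s => RtoC s) t 1.
Proof. apply (is_derive_C_RtoC (fun s => s)). exact (is_derive_id t). Qed.

Lemma is_derive_C_exp t : is_derive_C (fun s => RtoC (exp s)) t (exp t).
Proof. apply (is_derive_C_RtoC exp). exact (is_derive_exp t). Qed.

Lemma is_derive_C_plus f g t df dg : is_derive_C f t df -> is_derive_C g t dg ->
  is_derive_C (fun s => f s + g s)%C t (df + dg)%C.
Proof. intros [H1 H2] [H3 H4]. split; simpl; apply (is_derive_plus (V := R_NormedModule)); auto. Qed.

Lemma is_derive_C_mult f g t df dg : is_derive_C f t df -> is_derive_C g t dg ->
  is_derive_C (fun s => f s * g s)%C t (df * g t + f t * dg)%C.
Proof.
  intros [H1 H2] [H3 H4].
  assert (Hm : forall (u v : R -> R) du dv, is_derive u t du -> is_derive v t dv ->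
    is_derive (fun s => u s * v s) t (du * v t + u t * dv)).
  { intros u v du dv Hu Hv. apply (is_derive_mult u v t du dv Hu Hv). intros; apply Rmult_comm. }
  split; simpl.
  - eapply is_derive_eq; [apply (is_derive_minus (V := R_NormedModule)); apply Hm; eauto|].
    simpl. unfold minus, plus, opp; simpl. ring.
  - eapply is_derive_eq; [apply (is_derive_plus (V := R_NormedModule)); apply Hm; eauto|].
    simpl. unfold plus; simpl. ring.
Qed.

Lemma is_derive_C_scal (k : C) f t df : is_derive_C f t df ->
  is_derive_C (fun s => k * f s)%C t (k * df)%C.
Proof.
  intros H. eapply is_derive_C_eq; [apply (is_derive_C_mult (fun _ => k)); [apply is_derive_C_const|exact H]|].
  ring.
Qed.

Lemma is_derive_C_minus f g t df dg : is_derive_C f t df -> is_derive_C g t dg ->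
  is_derive_C (fun s => f s - g s)%C t (df - dg)%C.
Proof.
  intros H1 H2. apply (is_derive_C_eq _ _ (df + (-1) * dg)%C); [|ring].
  eapply is_derive_C_ext; [|apply is_derive_C_plus; [exact H1|apply (is_derive_C_scal (-1)); exact H2]].
  intros; simpl; ring.
Qed.

Lemma is_derive_C_inv (f : R -> C) t df : f t <> 0 -> is_derive_C f t df ->
  is_derive_C (fun s => / f s)%C t (- (df / (f t * f t)))%C.
Proof.
  intros Hz [H1 H2].
  assert (Hn : fst (f t) ^ 2 + snd (f t) ^ 2 <> 0).
  { intros E. apply Hz. destruct (f t) as [x y]. simpl in E.
    assert (x = 0) by nra. assert (y = 0) by nra. subst. reflexivity. }
  assert (HN : is_derive (fun s => fst (f s) ^ 2 + snd (f s) ^ 2) t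
                 (2 * fst (f t) * fst df + 2 * snd (f t) * snd df)).
  { apply (is_derive_ext (fun s => fst (f s) * fst (f s) + snd (f s) * snd (f s))); [intros; simpl; ring|].
    eapply is_derive_eq; [apply (is_derive_plus (V := R_NormedModule));
      apply (is_derive_mult _ _ t (fst df) (fst df) H1 H1 Rmult_comm)
      || apply (is_derive_mult _ _ t (snd df) (snd df) H2 H2 Rmult_comm)|].
    unfold plus, mult; simpl. ring. }
  assert (Hsq : forall x y : R, x ^ 2 + y ^ 2 <> 0 ->
    (x * x - y * y) * (x * x - y * y) + (x * y + y * x) * (x * y + y * x) <> 0).
  { intros x y Hxy. replace ((x * x - y * y) * (x * x - y * y) + (x * y + y * x) * (x * y + y * x))
      with ((x ^ 2 + y ^ 2) * (x ^ 2 + y ^ 2)) by ring. apply Rmult_integral_contrapositive_currified; auto. }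
  split; simpl.
  - eapply is_derive_eq. { apply is_derive_div. exact H1. exact HN. exact Hn. }
    cbv beta in *. destruct (f t) as [x y], df as [dx dy]; simpl in *. field. split; [apply Hsq, Hn | intros E; apply Hn; lra].
  - eapply is_derive_eq.
    { apply is_derive_div. apply (is_derive_opp (fun s => snd (f s))). exact H2. exact HN. exact Hn. }
    cbv beta in *. destruct (f t) as [x y], df as [dx dy]; simpl in *. unfold opp; simpl.
    field. split; [apply Hsq, Hn | intros E; apply Hn; lra].
Qed.

Lemma is_derive_C_pow f t df n : is_derive_C f t df ->
  is_derive_C (fun s => f s ^ n)%C t (INR n * f t ^ (n - 1) * df)%C.
Proof.
  intros H. induction n as [|n IH].
  - eapply is_derive_C_eq; [apply (is_derive_C_ext (fun _ => RtoC 1)); [reflexivity|apply is_derive_C_const]|].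
    simpl. ring.
  - eapply is_derive_C_eq; [apply (is_derive_C_ext (fun s => f s * f s ^ n)%C);
      [intros; symmetry; apply Cpow_S | apply (is_derive_C_mult _ _ _ _ _ H IH)]|].
    rewrite S_INR, RtoC_plus. destruct n as [|n]; [simpl; ring|].
    replace (S (S n) - 1)%nat with (S n) by lia. replace (S n - 1)%nat with n by lia.
    rewrite Cpow_S. ring.
Qed.

Lemma is_derive_C_Csum0 (h : nat -> R -> C) (dh : nat -> C) t N :
  (forall j, (j <= N)%nat -> is_derive_C (h j) t (dh j)) ->
  is_derive_C (fun s => Csum0 (fun j => h j s) N) t (Csum0 dh N).
Proof.
  induction N as [|N IH]; intros H; cbn [Csum0]; [apply H; lia|].
  apply is_derive_C_plus; [apply IH; intros; apply H; lia | apply H; lia].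
Qed.

Lemma is_derive_C_Derive f t l : is_derive_C f t l ->
  (Derive (fun s => fst (f s)) t, Derive (fun s => snd (f s)) t) = l.
Proof.
  intros [H1 H2]. apply injective_projections; simpl; apply is_derive_unique; assumption.
Qed.

(** * The geodesics *)

Definition cH (a : R) : C := (1, - a).

(* [vH a] runs from [-1] to [1]; [v_of_exp] and [v_of_exp_neg] expose its limits at [-oo] and
   [+oo]. *)
Definition v_of_exp (a s : R) : C := ((cH a * s - 1) / (cH a * s + 1))%C.
Definition v_of_exp_neg (a s : R) : C := ((cH a - s) / (cH a + s))%C.
Definition vH (a t : R) : C := v_of_exp a (exp t).

Lemma fst_neq0 (z : C) : fst z <> 0 -> z <> 0.
Proof. intros H E. apply H. rewrite E. reflexivity. Qed.

Lemma cH_denom_neq0 a s : 0 <= s -> (cH a * s + 1)%C <> 0.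
Proof. intros H. apply fst_neq0. unfold cH; simpl. lra. Qed.

Lemma Cdiv_eq_cross (N D P Q : C) : D <> 0 -> Q <> 0 -> (N * Q = D * P)%C -> (N / D = P / Q)%C.
Proof.
  intros HD HQ E. transitivity ((N * Q) / (D * Q))%C; [field; split; auto|].
  rewrite E. field. split; auto.
Qed.

Lemma vH_exp_neg a t : vH a t = v_of_exp_neg a (exp (- t)).
Proof.
  unfold vH, v_of_exp, v_of_exp_neg. pose proof (exp_pos t). rewrite exp_Ropp.
  apply Cdiv_eq_cross.
  - apply cH_denom_neq0. lra.
  - apply fst_neq0. unfold cH; simpl. pose proof (Rinv_0_lt_compat _ H). lra.
  - unfold cH. apply injective_projections; simpl; field; lra.
Qed.

Lemma eiC_omegaH b a : eiC (omegaH b a) = (eiC b * ((- a * muH a)%R, muH a))%C.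
Proof.
  unfold omegaH. rewrite !eiC_add. unfold eiC at 2 3.
  rewrite cos_atan, sin_atan, cos_PI2, sin_PI2.
  unfold muH, Rsqr. replace (1 + a * a) with (1 + a ^ 2) by ring.
  rewrite <- Cmult_assoc. f_equal.
  apply injective_projections; simpl; field; apply Rgt_not_eq, sqrt_one_plus_sq_pos.
Qed.

Lemma tanhR_half t : tanhR (t / 2) = (exp t - 1) / (exp t + 1).
Proof.
  unfold tanhR. replace (exp t) with (exp (t / 2) * exp (t / 2)) by (rewrite <- exp_plus; f_equal; field).
  rewrite exp_Ropp. pose proof (exp_pos (t / 2)). field. nra.
Qed.

Lemma zH_eq b a t : zH b a t = (wH b a + 2 * xiH b a * vH a t)%C.
Proof.
  unfold zH, wH, xiH, vH, v_of_exp. rewrite eiC_omegaH, tanhR_half.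
  set (s := exp t). set (u := (s - 1) / (s + 1)). set (mu := muH a).
  assert (Hs : 0 < s) by apply exp_pos.
  set (k := / (1 + a ^ 2)).
  assert (Hk : mu ^ 2 = k).
  { pose proof (muH_sq a). unfold k. apply (Rmult_eq_reg_r (1 + a ^ 2)); [|nra].
    fold mu in H. rewrite H. field. nra. }
  assert (EA : (RtoC (- a * mu) * ((- a * mu)%R, mu))%C = ((a ^ 2 * k)%R, (- a * k)%R))
    by (rewrite <- Hk; apply injective_projections; simpl; ring).
  assert (EB : (2 * (0, (/ 2 * mu)%R) * ((- a * mu)%R, mu))%C = ((- k)%R, (- a * k)%R))
    by (rewrite <- Hk; apply injective_projections; simpl; field).
  set (N := ((2, a) * RtoC u + (0, a))%C).
  set (D := ((0, a) * RtoC u + ((-2)%R, a))%C).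
  set (Q := (cH a * s + 1)%C).
  set (P := (((a ^ 2 * k)%R, (- a * k)%R) * Q + ((- k)%R, (- a * k)%R) * (cH a * s - 1))%C).
  assert (HD : D <> 0) by (apply fst_neq0; unfold D; simpl; lra).
  assert (HQ : Q <> 0) by (apply cH_denom_neq0; lra).
  assert (E : (N / D = P / Q)%C).
  { apply Cdiv_eq_cross; auto. unfold N, D, P, Q, cH, u, k.
    apply injective_projections; simpl; field; split; nra. }
  rewrite E. unfold P. rewrite <- EA, <- EB. field. auto.
Qed.

Lemma vH_derive a t : is_derive_C (vH a) t (/ 2 * (1 - vH a t ^ 2))%C.
Proof.
  pose proof (exp_pos t) as Hs.
  assert (Hnum : is_derive_C (fun s => cH a * exp s - 1)%C t (cH a * exp t - 0)%C).
  { apply is_derive_C_minus; [apply is_derive_C_scal, is_derive_C_exp|apply is_derive_C_const]. }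
  assert (Hden : is_derive_C (fun s => cH a * exp s + 1)%C t (cH a * exp t + 0)%C).
  { apply is_derive_C_plus; [apply is_derive_C_scal, is_derive_C_exp|apply is_derive_C_const]. }
  apply is_derive_C_inv in Hden; [|apply cH_denom_neq0; lra].
  eapply is_derive_C_eq; [exact (is_derive_C_mult _ _ _ _ _ Hnum Hden)|].
  unfold vH, v_of_exp. pose proof (cH_denom_neq0 a (exp t) ltac:(lra)).
  rewrite Cpow_S, Cpow_1_r. field. auto.
Qed.

Lemma zHdot_eq b a t : zHdot b a t = (xiH b a * (1 - vH a t ^ 2))%C.
Proof.
  assert (H : is_derive_C (zH b a) t (2 * xiH b a * (/ 2 * (1 - vH a t ^ 2)))%C).
  { eapply is_derive_C_ext; [intros s; symmetry; apply zH_eq|].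
    eapply is_derive_C_eq; [apply is_derive_C_plus;
      [apply is_derive_C_const|apply is_derive_C_scal, vH_derive]|]. ring. }
  unfold zHdot. rewrite (is_derive_C_Derive _ _ _ H). field.
Qed.

(** * The integrals [I_{p,q}] *)

Definition C_limit (f : R -> C) (F : (R -> Prop) -> Prop) (L : C) : Prop :=
  filterlim (fun t => fst (f t)) F (locally (fst L)) /\ filterlim (fun t => snd (f t)) F (locally (snd L)).

Lemma C_limit_comp_derivable (K : R -> C) l (phi : R -> R) F : Filter F ->
  is_derive_C K 0 l -> filterlim phi F (locally 0) -> C_limit (fun t => K (phi t)) F (K 0).
Proof.
  intros HF [D1 D2] Hphi. split.
  - apply (filterlim_comp R R R phi (fun s => fst (K s)) F (locally 0) _ Hphi).
    exact (ex_derive_continuous (fun s => fst (K s)) 0 (ex_intro _ _ D1)).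
  - apply (filterlim_comp R R R phi (fun s => snd (K s)) F (locally 0) _ Hphi).
    exact (ex_derive_continuous (fun s => snd (K s)) 0 (ex_intro _ _ D2)).
Qed.

Lemma RInt_gen_of_derive (h g : R -> R) l1 l2 :
  (forall t, is_derive h t (g t)) -> (forall t, continuous g t) ->
  filterlim h (Rbar_locally m_infty) (locally l1) -> filterlim h (Rbar_locally p_infty) (locally l2) ->
  RInt_gen g (Rbar_locally m_infty) (Rbar_locally p_infty) = l2 - l1.
Proof.
  intros Hd Hc Hl1 Hl2.
  rewrite (functional_extensionality g (Derive h)) by (intros t; symmetry; apply is_derive_unique, Hd).
  apply is_RInt_gen_unique, is_RInt_gen_Derive; auto.
  - apply filter_forall. intros ab x _. exists (g x). apply Hd.
  - apply filter_forall. intros ab x _.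
    apply (continuous_ext g); [intros t; symmetry; apply is_derive_unique, Hd | apply Hc].
Qed.

Lemma RInt_gen_C_of_antiderivative (Hf g : R -> C) (L1 L2 : C) :
  (forall t, is_derive_C Hf t (g t)) -> (forall t, exists l, is_derive_C g t l) ->
  C_limit Hf (Rbar_locally m_infty) L1 -> C_limit Hf (Rbar_locally p_infty) L2 ->
  (RInt_gen (fun t => fst (g t)) (Rbar_locally m_infty) (Rbar_locally p_infty),
   RInt_gen (fun t => snd (g t)) (Rbar_locally m_infty) (Rbar_locally p_infty)) = (L2 - L1)%C.
Proof.
  intros Hd Hg [Hm1 Hm2] [Hp1 Hp2].
  apply injective_projections; simpl; unfold Rminus.
  - apply (RInt_gen_of_derive (fun t => fst (Hf t))); auto; [intros t; apply Hd|].
    intros t. destruct (Hg t) as [l [D _]]. exact (ex_derive_continuous _ t (ex_intro _ _ D)).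
  - apply (RInt_gen_of_derive (fun t => snd (Hf t))); auto; [intros t; apply Hd|].
    intros t. destruct (Hg t) as [l [_ D]]. exact (ex_derive_continuous _ t (ex_intro _ _ D)).
Qed.

Section Antiderivative.
Variables (w xi : C) (n q : nat).

Definition Acoef (j : nat) : C := (2 * xi ^ q * INR (binom n j) * w ^ (n - j) * (2 * xi) ^ j)%C.
Definition ccoef (j l : nat) : R := INR (binom (q - 1) l) * (-1) ^ l / INR (j + 2 * l + 1).

(* Termwise primitive of [2 xi^q (w + 2 xi V)^n (1 - V^2)^(q-1)], both powers expanded binomially. *)
Definition antideriv (V : C) : C :=
  Csum0 (fun j => Csum0 (fun l => Acoef j * ccoef j l * V ^ (j + 2 * l + 1))%C (q - 1)) n.

Lemma antideriv_derivative_eq V :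
  Csum0 (fun j => Csum0 (fun l =>
    Acoef j * ccoef j l * (INR (j + 2 * l + 1) * V ^ (j + 2 * l + 1 - 1)))%C (q - 1)) n
  = (2 * xi ^ q * (w + 2 * xi * V) ^ n * (1 - V ^ 2) ^ (q - 1))%C.
Proof.
  replace (1 - V ^ 2)%C with (1 + (-1) * V ^ 2)%C by ring.
  rewrite !Cpow_binomial.
  transitivity (2 * xi ^ q * (Csum0 (fun j => INR (binom n j) * w ^ (n - j) * (2 * xi * V) ^ j) n
    * Csum0 (fun l => INR (binom (q - 1) l) * 1 ^ (q - 1 - l) * ((-1) * V ^ 2) ^ l) (q - 1)))%C;
    [|ring].
  rewrite Csum0_mult, <- Csum0_scal. apply Csum0_ext. intros j Hj.
  rewrite <- Csum0_scal. apply Csum0_ext. intros l Hl.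
  unfold Acoef, ccoef. rewrite !Cpow_mult_l, Cpow_1_l, <- Cpow_mult_r.
  replace (j + 2 * l + 1 - 1)%nat with (j + 2 * l)%nat by lia. rewrite Cpow_add_r.
  assert (HI : INR (j + 2 * l + 1) <> 0) by (apply not_0_INR; lia).
  rewrite RtoC_div, RtoC_mult, RtoC_pow by exact HI. field. apply fst_neq0. exact HI.
Qed.

Lemma antideriv_derive f t df : is_derive_C f t df ->
  is_derive_C (fun s => antideriv (f s)) t
    (2 * xi ^ q * (w + 2 * xi * f t) ^ n * (1 - f t ^ 2) ^ (q - 1) * df)%C.
Proof.
  intros H. rewrite <- antideriv_derivative_eq.
  eapply is_derive_C_eq.
  - apply (is_derive_C_Csum0 (fun j s => Csum0 (fun l => Acoef j * ccoef j l * f s ^ (j + 2 * l + 1))%C (q - 1))).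
    intros j _. apply (is_derive_C_Csum0 (fun l s => Acoef j * ccoef j l * f s ^ (j + 2 * l + 1))%C).
    intros l _. apply is_derive_C_scal, is_derive_C_pow, H.
  - rewrite Cmult_comm, <- Csum0_scal. apply Csum0_ext. intros j _. rewrite <- Csum0_scal.
    apply Csum0_ext. intros l _. ring.
Qed.

End Antiderivative.

Lemma v_of_exp_derivable a : exists l, is_derive_C (v_of_exp a) 0 l.
Proof.
  assert (Hnum : is_derive_C (fun s => cH a * s - 1)%C 0 (cH a * 1 - 0)%C).
  { apply is_derive_C_minus; [apply is_derive_C_scal, is_derive_C_id|apply is_derive_C_const]. }
  assert (Hden : is_derive_C (fun s => cH a * s + 1)%C 0 (cH a * 1 + 0)%C).
  { apply is_derive_C_plus; [apply is_derive_C_scal, is_derive_C_id|apply is_derive_C_const]. }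
  apply is_derive_C_inv in Hden; [|apply cH_denom_neq0; lra].
  eexists. exact (is_derive_C_mult _ _ _ _ _ Hnum Hden).
Qed.

Lemma v_of_exp_neg_derivable a : exists l, is_derive_C (v_of_exp_neg a) 0 l.
Proof.
  assert (Hnum : is_derive_C (fun s => cH a - s)%C 0 (0 - 1)%C).
  { apply is_derive_C_minus; [apply is_derive_C_const|apply is_derive_C_id]. }
  assert (Hden : is_derive_C (fun s => cH a + s)%C 0 (0 + 1)%C).
  { apply is_derive_C_plus; [apply is_derive_C_const|apply is_derive_C_id]. }
  apply is_derive_C_inv in Hden; [|apply fst_neq0; unfold cH; simpl; lra].
  eexists. exact (is_derive_C_mult _ _ _ _ _ Hnum Hden).
Qed.

Lemma v_of_exp_0 a : v_of_exp a 0 = (-1)%R.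
Proof. unfold v_of_exp. apply injective_projections; unfold cH; simpl; field. Qed.

Lemma v_of_exp_neg_0 a : v_of_exp_neg a 0 = 1.
Proof.
  unfold v_of_exp_neg. assert (H : cH a <> 0) by (apply fst_neq0; unfold cH; simpl; lra).
  replace (cH a + 0)%C with (cH a) by ring. replace (cH a - 0)%C with (cH a) by ring.
  field. exact H.
Qed.

Lemma exp_neg_lim_p_infty : filterlim (fun t => exp (- t)) (Rbar_locally p_infty) (locally 0).
Proof.
  apply (is_lim_comp exp (fun t => - t) p_infty 0 m_infty).
  - exact is_lim_exp_m.
  - exact (is_lim_opp (fun y => y) p_infty p_infty (is_lim_id p_infty)).
  - exists 0. intros; discriminate.
Qed.

Section GeodesicIntegral.
Variables (b a : R) (n q : nat).
Hypothesis Hq : (1 <= q)%nat.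

Let Phi := antideriv (wH b a) (xiH b a) n q.

Lemma integrand_antiderivative t :
  is_derive_C (fun s => Phi (vH a s)) t (zH b a t ^ n * zHdot b a t ^ q)%C.
Proof.
  eapply is_derive_C_eq; [apply antideriv_derive, vH_derive|].
  rewrite zH_eq, zHdot_eq, Cpow_mult_l. set (U := (1 - vH a t ^ 2)%C).
  replace (U ^ q)%C with (U * U ^ (q - 1))%C by (rewrite <- Cpow_S; f_equal; lia).  field.
Qed.

Lemma integrand_derivable t : exists l, is_derive_C (fun s => zH b a s ^ n * zHdot b a s ^ q)%C t l.
Proof.
  assert (Dz : is_derive_C (fun s => wH b a + 2 * xiH b a * vH a s)%C t
    (0 + 2 * xiH b a * (/ 2 * (1 - vH a t ^ 2)))%C).
  { apply is_derive_C_plus; [apply is_derive_C_const|apply is_derive_C_scal, vH_derive]. }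
  assert (Dd : is_derive_C (fun s => xiH b a * (1 - vH a s ^ 2))%C t
    (xiH b a * (0 - INR 2 * vH a t ^ (2 - 1) * (/ 2 * (1 - vH a t ^ 2))))%C).
  { apply is_derive_C_scal, is_derive_C_minus; [apply is_derive_C_const|apply is_derive_C_pow, vH_derive]. }
  eexists. eapply is_derive_C_ext;
    [|exact (is_derive_C_mult _ _ _ _ _ (is_derive_C_pow _ _ _ n Dz) (is_derive_C_pow _ _ _ q Dd))].
  intros s. rewrite zH_eq, zHdot_eq. reflexivity.
Qed.

Lemma IH_eq : IH n q b a = (Phi 1 - Phi (-1)%R)%C.
Proof.
  destruct (v_of_exp_derivable a) as [lm Dm]. destruct (v_of_exp_neg_derivable a) as [lp Dp].
  unfold IH. apply (RInt_gen_C_of_antiderivative (fun s => Phi (vH a s))).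
  - exact integrand_antiderivative.
  - exact integrand_derivable.
  - rewrite <- (v_of_exp_0 a).
    exact (C_limit_comp_derivable (fun s => Phi (v_of_exp a s)) _ exp _ _
      (antideriv_derive _ _ _ _ _ _ _ Dm) is_lim_exp_m).
  - rewrite <- (v_of_exp_neg_0 a).
    assert (L : C_limit (fun t => Phi (v_of_exp_neg a (exp (- t)))) (Rbar_locally p_infty)
      (Phi (v_of_exp_neg a 0))).
    { exact (C_limit_comp_derivable (fun s => Phi (v_of_exp_neg a s)) _ (fun t => exp (- t)) _ _
        (antideriv_derive _ _ _ _ _ _ _ Dp) exp_neg_lim_p_infty). }
    destruct L as [L1 L2]. split; eapply filterlim_ext; try eassumption; intros t; simpl;
      rewrite vH_exp_neg; reflexivity.
Qed.

End GeodesicIntegral.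

Lemma Csum0_minus f g n : Csum0 (fun j => f j - g j)%C n = (Csum0 f n - Csum0 g n)%C.
Proof. induction n; simpl; auto. rewrite IHn. ring. Qed.

Lemma Csum0_sub_first f n :
  (Csum0 f n - f O)%C = Csum0 (fun j => match j with O => RtoC 0 | _ => f j end) n.
Proof. induction n as [|n IH]; simpl; [ring|]. rewrite <- IH. ring. Qed.

Definition mcoef (q j : nat) : R := (1 + (-1) ^ j) * sum_f_R0 (ccoef q j) (q - 1).

Lemma antideriv_sym_diff w xi n q :
  (antideriv w xi n q 1 - antideriv w xi n q (-1)%R)%C
  = Csum0 (fun j => Acoef w xi n q j * mcoef q j)%C n.
Proof.
  unfold antideriv. rewrite <- Csum0_minus. apply Csum0_ext. intros j _.
  rewrite <- Csum0_minus. unfold mcoef. rewrite RtoC_mult, <- Csum0_RtoC, <- !Csum0_scal.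
  apply Csum0_ext. intros l _.
  rewrite Cpow_1_l, <- RtoC_pow.
  replace ((-1) ^ (j + 2 * l + 1)) with (- (-1) ^ j) by (rewrite !pow_add, pow_1_even; simpl; ring).
  rewrite RtoC_opp, RtoC_plus, RtoC_pow. ring.
Qed.

Lemma mcoef_odd q j : Nat.Odd j -> mcoef q j = 0.
Proof.
  intros [k ->]. unfold mcoef. rewrite pow_add, pow_1_even. simpl. ring.
Qed.

(* The sum equals [int_0^1 (1 - s^2)^M ds]; it is evaluated as [P 1 - P 0] for a primitive [P]
   and shown positive by the mean value theorem. *)
Lemma alternating_binom_sum_pos M :
  0 < sum_f_R0 (fun l => INR (binom M l) * (-1) ^ l / INR (2 * l + 1)) M.
Proof.
  set (c := fun l => INR (binom M l) * (-1) ^ l / INR (2 * l + 1)).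
  set (P := fun s => Csum0 (fun l => c l * RtoC s ^ (2 * l + 1))%C M).
  assert (D : forall s, is_derive_C P s ((1 - s ^ 2) ^ M)%R).
  { intros s. eapply is_derive_C_eq.
    - apply (is_derive_C_Csum0 (fun l s => c l * RtoC s ^ (2 * l + 1))%C).
      intros l _. apply is_derive_C_scal, is_derive_C_pow, is_derive_C_id.
    - replace (1 - s ^ 2) with (1 + (- s ^ 2)) by ring.
      rewrite RtoC_pow, RtoC_plus, Cpow_binomial. apply Csum0_ext. intros l _. unfold c.
      replace (2 * l + 1 - 1)%nat with (2 * l)%nat by lia.
      assert (HI : INR (2 * l + 1) <> 0) by (apply not_0_INR; lia).
      rewrite Cpow_1_l, <- !RtoC_pow, RtoC_div, !RtoC_mult by exact HI.
      replace ((- s ^ 2) ^ l) with ((-1) ^ l * s ^ (2 * l))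
        by (rewrite pow_mult, <- Rpow_mult_distr; f_equal; ring).
      rewrite RtoC_mult. field. apply fst_neq0. exact HI. }
  assert (Hd : forall x, derivable_pt_lim (fun s => fst (P s)) x ((1 - x ^ 2) ^ M)).
  { intros x. apply is_derive_Reals. exact (proj1 (D x)). }
  destruct (MVT_cor2 (fun s => fst (P s)) (fun x => (1 - x ^ 2) ^ M) 0 1 Rlt_0_1 (fun x _ => Hd x))
    as [x [E Hx]].
  assert (HP : forall s, fst (P s) = sum_f_R0 (fun l => c l * s ^ (2 * l + 1)) M).
  { intros s. unfold P. rewrite (Csum0_ext _ (fun l => RtoC (c l * s ^ (2 * l + 1)))), Csum0_RtoC;
      [reflexivity|]. intros l _. rewrite RtoC_mult, RtoC_pow. reflexivity. }
  rewrite !HP in E.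
  rewrite (sum_eq (fun l => c l * 0 ^ (2 * l + 1)) (fun _ => 0)), sum_cte in E
    by (intros; rewrite pow_i by lia; ring).
  rewrite (sum_eq (fun l => c l * 1 ^ (2 * l + 1)) c) in E by (intros; rewrite pow1; ring).
  assert (0 < (1 - x ^ 2) ^ M) by (apply pow_lt; nra). nra.
Qed.

Lemma mcoef0_pos q : 0 < mcoef q 0.
Proof.
  unfold mcoef, ccoef. simpl pow.
  apply Rmult_lt_0_compat; [lra|exact (alternating_binom_sum_pos (q - 1))].
Qed.

Definition xi_w_monomial (r p : nat) (b a : R) : C := (xiH b a ^ (2 * p) * wH b a ^ (r - 2 * p))%C.

(* Only the even-index terms of [antideriv 1 - antideriv (-1)] survive, and the [j = 2 i] term
   is a multiple of [xi^(2 (p + i)) w^(r - 2 (p + i))]. *)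
Lemma IH_mod_xi_w_monomial r p : (1 <= p)%nat -> (2 * p <= r)%nat ->
  multiple_mod_span (fun k => uncurry (xi_w_monomial r k)) (S p) (Nat.div r 2)
    (uncurry (IH (r - 2 * p) (2 * p))) (uncurry (xi_w_monomial r p)).
Proof.
  intros Hp1 Hp. pose proof (div2_bounds r).
  set (n := (r - 2 * p)%nat). set (q := (2 * p)%nat).
  exists (RtoC (2 * mcoef q 0)). split.
  { intros E. apply (f_equal fst) in E. simpl in E. pose proof (mcoef0_pos q). lra. }
  apply (in_span_range_ext _ _ _ (fun x => Csum0 (fun j => match j with O => RtoC 0 | _ =>
      Acoef (wH (fst x) (snd x)) (xiH (fst x) (snd x)) n q j * mcoef q j end)%C n)).
  { intros [b a]. simpl. rewrite <- Csum0_sub_first, IH_eq, antideriv_sym_diff by (unfold q; lia).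
    f_equal. unfold Acoef, xi_w_monomial. fold n q. rewrite binom_n0, Nat.sub_0_r, RtoC_mult.
    simpl INR. simpl Cpow. ring. }
  apply in_span_range_Csum0. intros [|j] Hj; [apply in_span_range0|].
  destruct (Nat.Even_or_Odd (S j)) as [[i Hi]|Ho].
  - rewrite Hi. assert (1 <= i)%nat by lia.
    apply (in_span_range_ext _ _ _ (fun x => RtoC (2 * INR (binom n (2 * i)) * 2 ^ (2 * i) * mcoef q (2 * i))
      * uncurry (xi_w_monomial r (p + i)) x)%C).
    { intros [b a]. cbn [uncurry fst snd]. unfold Acoef, xi_w_monomial.
      replace (2 * (p + i))%nat with (q + 2 * i)%nat by (unfold q; lia).
      replace (r - (q + 2 * i))%nat with (n - 2 * i)%nat by (unfold n, q; lia).
      rewrite Cpow_add_r, Cpow_mult_l, !RtoC_mult, RtoC_pow. ring. }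
    apply in_span_rangeZ, (in_span_range_gen (fun k => uncurry (xi_w_monomial r k))); unfold n in *; lia.
  - rewrite mcoef_odd by auto.
    apply (in_span_range_ext _ _ _ (fun _ => RtoC 0)); [intros; ring|apply in_span_range0].
Qed.

Lemma normalized_cheb_coef pn n : normalized_cheb pn ->
  exists c, c <> 0 /\ forall t, pn n t = c * chebU n t.
Proof.
  intros Hn. destruct (Hn n) as [[c Hc] Hint]. exists c. split; auto.
  intros ->. rewrite (RInt_ext _ (fun _ => 0)), RInt_const in Hint
    by (intros x _; rewrite Hc; simpl; ring).
  unfold scal in Hint; simpl in Hint; unfold mult in Hint; simpl in Hint.
  rewrite Rmult_0_r in Hint. pose proof PI_RGT_0.
  apply (Rinv_neq_0_compat (2 * PI)); [lra|]. auto.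
Qed.

Section Spans.
Variable r : nat.
Let m := Nat.div r 2.

Lemma upper_triangular_range : forall p, (1 <= p <= m)%nat ->
  (1 <= S p)%nat /\ (m <= m)%nat /\ forall k, (S p <= k <= m)%nat -> (m - k < m - p)%nat.
Proof. intros; repeat split; intros; lia. Qed.

Lemma lower_triangular_range : forall p, (1 <= p <= m)%nat ->
  (1 <= 1)%nat /\ (p - 1 <= m)%nat /\ forall k, (1 <= k <= p - 1)%nat -> (k < p)%nat.
Proof. intros; repeat split; intros; lia. Qed.

Lemma psi0H_span_eq pn : normalized_cheb pn ->
  forall f, in_span (basis_fun r) m f <-> in_span (fun p => psi0H pn (r - 2 * p) (- Z.of_nat p)) m f.
Proof.
  intros Hn. apply (in_span_eq_of_triangular _ _ m (fun p => m - p)%nat S (fun _ => m)).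
  - exact upper_triangular_range.
  - intros p Hp. pose proof (div2_bounds r).
    destruct (normalized_cheb_coef pn (r - 2 * p) Hn) as [c [Hc Hpn]].
    apply (multiple_mod_span_factor _ _ _ _ _ (fun t => RtoC ((1 - t ^ 2) * (c * chebU (r - 2 * p) t)))).
    + intros b a. rewrite psi0H_factor by lia. rewrite Hpn. reflexivity.
    + apply basis_poly_cheb_mod; auto; lia.
Qed.

Lemma xi_w_monomial_span_eq :
  forall f, in_span (basis_fun r) m f <-> in_span (xi_w_monomial r) m f.
Proof.
  apply (in_span_eq_of_triangular _ _ m (fun p => p) (fun _ => 1%nat) (fun p => p - 1)%nat).
  - exact lower_triangular_range.
  - intros p Hp. pose proof (div2_bounds r).
    apply (multiple_mod_span_factor _ _ _ _ _ (fun t =>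
      RtoC (((-1/4) ^ p * (-1) ^ (r - 2 * p)) * ((1 - t ^ 2) ^ p * t ^ (r - 2 * p))))).
    + intros b a. apply xi_w_monomial_factor. lia.
    + apply basis_poly_pow_mod; try lia.
      apply Rmult_integral_contrapositive_currified; apply pow_nonzero; lra.
Qed.

Definition xi_w_discriminant (p : nat) (b a : R) : C :=
  (xiH b a ^ 2 * (wH b a ^ (r - 2 * p) * (wH b a ^ 2 - 4 * xiH b a ^ 2) ^ (p - 1)))%C.

Lemma xi_w_discriminant_span_eq :
  forall f, in_span (basis_fun r) m f <-> in_span xi_w_discriminant m f.
Proof.
  apply (in_span_eq_of_triangular _ _ m (fun p => p) (fun _ => 1%nat) (fun p => p - 1)%nat).
  - exact lower_triangular_range.
  - intros p Hp. pose proof (div2_bounds r).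
    apply (multiple_mod_span_factor _ _ _ _ _ (fun t =>
      RtoC ((-1/4 * (-1) ^ (r - 2 * p)) * ((1 - t ^ 2) * t ^ (r - 2 * p))))).
    + intros b a. apply xi_w_discriminant_factor; lia.
    + apply basis_poly_scal_mod.
      apply Rmult_integral_contrapositive_currified; [lra|apply pow_nonzero; lra].
Qed.

Lemma IH_span_eq :
  forall f, in_span (xi_w_monomial r) m f <-> in_span (fun p => IH (r - 2 * p) (2 * p)) m f.
Proof.
  apply (in_span_eq_of_triangular _ _ m (fun p => m - p)%nat S (fun _ => m)).
  - exact upper_triangular_range.
  - intros p Hp. pose proof (div2_bounds r). apply IH_mod_xi_w_monomial; lia.
Qed.

End Spans.

Theorem lemma4p9 (r : nat) (pn : nat -> R -> R) :
  (2 <= r)%nat -> normalized_cheb pn ->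
  let m := Nat.div r 2 in
  let F1 := fun p beta a => psi0H pn (r - 2 * p) (- Z.of_nat p) beta a in
  let F2 := fun p beta a => IH (r - 2 * p) (2 * p) beta a in
  let F3 := fun p beta a => Cmult (Cpow (xiH beta a) (2 * p)) (Cpow (wH beta a) (r - 2 * p)) in
  let F4 := fun p beta a =>
    Cmult (Cpow (xiH beta a) 2)
      (Cmult (Cpow (wH beta a) (r - 2 * p))
             (Cpow (Cminus (Cpow (wH beta a) 2) (Cmult (RtoC 4) (Cpow (xiH beta a) 2))) (p - 1))) in
  (forall f, in_span F1 m f <-> in_span F2 m f) /\
  (forall f, in_span F1 m f <-> in_span F3 m f) /\
  (forall f, in_span F1 m f <-> in_span F4 m f).
Proof.
  (* [2 <= r] only rules out empty families; the equalities of spans hold for every [r]. *)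
  intros _ Hn m F1 F2 F3 F4.
  assert (E1 : forall f, in_span F1 m f <-> in_span (basis_fun r) m f)
    by (intros f; symmetry; apply psi0H_span_eq, Hn).
  split; [|split]; intros f; rewrite E1.
  - etransitivity; [apply xi_w_monomial_span_eq|apply IH_span_eq].
  - apply xi_w_monomial_span_eq.
  - apply xi_w_discriminant_span_eq.
Qed.
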